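(* Let $q=p^k$ be an odd prime power ($p$ prime, $k\ge1$), and let $S$ be a Sylow $p$-subgroup of the symmetric group on $q$ points. Then for every element $s\in S$, there is a complete mapping $f$ of $\mathbb{F}_q$ with $\operatorname{CT}(f)=\operatorname{CT}(s)$.
   Context: A complete mapping of the field $\mathbb{F}_q$ is a permutation $f$ of $\mathbb{F}_q$ such that $x\mapsto f(x)+x$ is also a permutation of $\mathbb{F}_q$. The cycle type $\operatorname{CT}(\sigma)$ of a permutation $\sigma$ of a finite set $\Omega$ is the monomial $x_1^{k_1}\cdots x_{|\Omega|}^{k_{|\Omega|}}$, where $k_\ell$ is the number of cycles of length $\ell$ of $\sigma$. *)

From HB Require Import structures.
From mathcomp Require Import all_boot all_algebra all_fingroup all_solvable all_field pgroup.
Set Implicit Arguments. Unset Strict Implicit. Unset Printing Implicit Defensive.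
Import GRing.Theory.
Local Open Scope ring_scope.

(* A complete mapping of a finite field F: a permutation f of F such that
   x |-> f x + x is also a permutation (i.e. injective, F being finite). *)
Definition complete_mapping (F : finFieldType) (f : {perm F}) : Prop :=
  injective (fun x : F => f x + x).

Definition cycle_type (T : finType) (s : {perm T}) : nat -> nat :=
  fun l => #|[set X in porbits s | #|X| == l]|%N.

From HB Require Import structures.
From mathcomp Require Import all_boot all_algebra all_fingroup all_solvable all_field pgroup.
From Stdlib Require Import FunctionalExtensionality.
Set Implicit Arguments. Unset Strict Implicit. Unset Printing Implicit Defensive.
Import GRing.Theory.

(* As an additive group F is 'F_p^n. Call a permutation f of 'F_p^n
   triangular if the i-th coordinate of f x - x only depends on the first i
   coordinates of x. Triangular permutations form a group of order
   p^(1 + p + ... + p^(n-1)), the p-part of (p^n)!, hence a Sylow p-subgroup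
   of Sym('F_p^n); and each of them is a complete mapping, because
   f x + x = 2 x + (f x - x) can be inverted coordinate by coordinate when p is
   odd. An element s of a Sylow p-subgroup of Sym(q) is a p-element, so by
   Sylow's theorem a copy of s on 'F_p^n is conjugate to a triangular
   permutation, which has the same cycle type as s. *)

Section PermMorph.
Variables (A B : finType) (h : A -> B) (s : {perm A}) (t : {perm B}).
Hypotheses (h_bij : bijective h) (hst : {morph h : a / s a >-> t a}).

Lemma morph_perm_expg m : {morph h : a / (s ^+ m)%g a >-> (t ^+ m)%g a}.
Proof. by elim: m => [|m IHm] a; rewrite ?expg0 ?perm1 // !expgSr !permM hst IHm. Qed.

Lemma porbit_morph a : porbit t (h a) = h @: porbit s a.
Proof.
apply/setP => b; apply/porbitP/imsetP => [[m ->]|[_ /porbitP[m ->] ->]].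
  by exists ((s ^+ m)%g a); rewrite ?mem_porbit ?morph_perm_expg.
by exists m; rewrite morph_perm_expg.
Qed.

Lemma porbits_morph : porbits t = [set h @: X | X : {set A} in porbits s].
Proof.
have [h' hK h'K] := h_bij.
apply/setP => X; apply/imsetP/imsetP => [[b _ ->]|[_ /imsetP[a _ ->] ->]].
  by exists (porbit s (h' b)); rewrite ?imset_f // -porbit_morph h'K.
by exists (h a); rewrite ?porbit_morph.
Qed.

Lemma cycle_type_morph : cycle_type t = cycle_type s.
Proof.
have h_inj := bij_inj h_bij.
apply: functional_extensionality => l; rewrite /cycle_type porbits_morph.
have -> : [set X in [set h @: X | X : {set A} in porbits s] | #|X| == l] =
          [set h @: X | X : {set A} in [set X in porbits s | #|X| == l]].
  apply/setP => X; apply/setIdP/imsetP => [[/imsetP[Y sY ->]]|[Y]].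
    by rewrite card_imset // => lY; exists Y; rewrite ?inE ?sY.
  by rewrite inE => /andP[sY lY] ->; rewrite imset_f ?card_imset.
by rewrite card_imset //; apply: imset_inj.
Qed.

Lemma order_morph_dvdn : (#[t] %| #[s])%g.
Proof.
have [h' _ h'K] := h_bij.
rewrite order_dvdn; apply/eqP/permP => b.
by rewrite -[b]h'K -morph_perm_expg expg_order !perm1.
Qed.

Lemma p_elt_morph p : (p.-elt s -> p.-elt t)%g.
Proof. exact/pnat_dvd/order_morph_dvdn. Qed.

End PermMorph.

Lemma cycle_type_conjg (T : finType) (s x : {perm T}) : cycle_type (s ^ x)%g = cycle_type s.
Proof.
apply: (cycle_type_morph (Bijective (permK x) (permKV x))) => a.
by rewrite conjgE !permM permK.
Qed.

Section TransportPerm.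
Variables (A B : finType) (h : A -> B) (h' : B -> A).
Hypotheses (hK : cancel h h') (h'K : cancel h' h).

Lemma transport_perm_inj (s : {perm A}) : injective (h \o s \o h').
Proof. by move=> b1 b2 /= /(can_inj hK) /perm_inj /(can_inj h'K). Qed.

Definition transport_perm (s : {perm A}) : {perm B} := perm (@transport_perm_inj s).

Lemma transport_permE (s : {perm A}) : {morph h : a / s a >-> transport_perm s a}.
Proof. by move=> a; rewrite permE /= hK. Qed.

End TransportPerm.

Lemma complete_mapping_morph (V : finZmodType) (F : finFieldType) (h : V -> F)
    (g : {perm V}) (f : {perm F}) :
  bijective h -> {morph h : u v / (u + v)%R} -> {morph h : v / g v >-> f v} ->
  injective (fun v => (g v + v)%R) -> complete_mapping f.
Proof.
case=> h' hK h'K hD hgf g_inj y1 y2 /=.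
by rewrite -[y1]h'K -[y2]h'K -!hgf -!hD => /(bij_inj (Bijective hK h'K))/g_inj->.
Qed.

Section TriangularPerms.
Local Open Scope ring_scope.
Variables (K : finFieldType) (n : nat).
Local Notation V := 'rV[K]_n.
Implicit Types (x y : V) (f g : {perm V}).

Definition agree (i : nat) x y := [forall j : 'I_n, (j < i)%N ==> (x 0 j == y 0 j)].

Lemma agreeW i j x y : (j <= i)%N -> agree i x y -> agree j x y.
Proof.
move=> le_ji /forallP xy; apply/forallP => l; apply/implyP => lt_lj.
by apply: (implyP (xy l)); apply: leq_trans le_ji.
Qed.

Lemma eq_row_agree x y : (forall i : 'I_n, agree i x y -> x 0 i = y 0 i) -> x = y.
Proof.
move=> xy; suff agree_all m : agree m x y.
  by apply/rowP => i; apply/eqP/(implyP (forallP (agree_all n) i)).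
elim: m => [|m IHm]; apply/forallP => j; apply/implyP => //; rewrite ltnS leq_eqVlt.
case/orP=> [/eqP def_j | lt_jm]; last exact: (implyP (forallP IHm j)).
by apply/eqP/xy; rewrite def_j.
Qed.

Definition triangular : {set {perm V}} :=
  [set f : {perm V} | [forall x, forall y, forall i : 'I_n,
    agree i x y ==> (f x 0 i - x 0 i == f y 0 i - y 0 i)]].

Lemma triangularP f :
  reflect (forall x y (i : 'I_n), agree i x y -> f x 0 i - x 0 i = f y 0 i - y 0 i)
          (f \in triangular).
Proof.
rewrite inE; apply: (iffP forallP) => [fT x y i xy | fT x].
  exact/eqP/(implyP (forallP (forallP (fT x) y) i)).
by apply/forallP => y; apply/forallP => i; apply/implyP => /fT/eqP.
Qed.

Lemma triangular_agree f i x y : f \in triangular -> agree i x y -> agree i (f x) (f y).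
Proof.
move=> /triangularP fT xy; apply/forallP => j; apply/implyP => lt_ji.
have := fT x y j (agreeW (ltnW lt_ji) xy).
by rewrite (eqP (implyP (forallP xy j) lt_ji)) => /subIr->.
Qed.

Lemma group_set_triangular : group_set triangular.
Proof.
apply/group_setP; split; first by apply/triangularP => x y i _; rewrite !perm1 !subrr.
move=> f g fT gT; apply/triangularP => x y i xy; rewrite !permM.
have subr_via (u v w : K) : u - w = (u - v) + (v - w) by rewrite addrA subrK.
rewrite (subr_via _ (f x 0 i) (x 0 i)) (subr_via _ (f y 0 i) (y 0 i)).
by rewrite (triangularP _ gT _ _ i (triangular_agree fT xy)) (triangularP _ fT _ _ i xy).
Qed.

Canonical triangular_group := group group_set_triangular.

Lemma triangular_add_id_inj f :
  2%:R != 0 :> K -> f \in triangular -> injective (fun x => f x + x).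
Proof.
move=> two_nz /triangularP fT x y fxy; apply: eq_row_agree => i xy.
have := congr1 (fun v : V => v 0 i) fxy; rewrite /= !mxE.
have addr_via (u w : K) : u + w = (u - w) + 2%:R * w by rewrite mulr_natl mulr2n addrA subrK.
rewrite (addr_via (f x 0 i)) (addr_via (f y 0 i)) (fT x y i xy) => /addrI.
exact: mulfI.
Qed.

Definition corrections := {dffun forall i : 'I_n, {ffun {ffun 'I_i -> K} -> K}}.

Definition prefix (i : 'I_n) x : {ffun 'I_i -> K} :=
  [ffun j : 'I_i => x 0 (widen_ord (ltnW (ltn_ord i)) j)].

Definition pad_prefix (i : 'I_n) (u : {ffun 'I_i -> K}) : V :=
  \row_j (if insub (val j) is Some j' then u j' else 0).

Lemma prefix_pad i u : prefix i (pad_prefix u) = u.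
Proof.
apply/ffunP => j; rewrite !ffunE mxE.
by case: insubP => [j' _ /val_inj-> | /=]; rewrite ?ltn_ord.
Qed.

Lemma agree_prefix (i : 'I_n) x y : agree i x y -> prefix i x = prefix i y.
Proof.
move=> /forallP xy; apply/ffunP => j; rewrite !ffunE.
apply/eqP/(implyP (xy _)); exact: (ltn_ord j).
Qed.

Lemma agree_pad_prefix (i : 'I_n) x : agree i (pad_prefix (prefix i x)) x.
Proof.
apply/forallP => j; apply/implyP => lt_ji; rewrite mxE.
case: insubP => [j' _ def_j | /=]; last by rewrite lt_ji.
by rewrite ffunE; apply/eqP; congr (x 0 _); apply: val_inj.
Qed.

Definition correct (c : corrections) x : V := \row_i (x 0 i + c i (prefix i x)).

Lemma correct_inj c : injective (correct c).
Proof.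
move=> x y /rowP cxy; apply: eq_row_agree => i /agree_prefix xy.
by have := cxy i; rewrite !mxE xy => /addIr.
Qed.

Definition correct_perm c : {perm V} := perm (@correct_inj c).

Lemma correct_perm_inj : injective correct_perm.
Proof.
move=> c c' /permP cc'; apply/ffunP => i; apply/ffunP => u.
by have := cc' (pad_prefix u); rewrite !permE => /rowP/(_ i); rewrite !mxE prefix_pad => /addrI.
Qed.

Lemma triangular_correct_perm : triangular = correct_perm @: [set: corrections].
Proof.
apply/setP => f; apply/idP/imsetP => [/triangularP fT | [c _ ->]].
  pose c : corrections := [ffun i => [ffun u => f (pad_prefix u) 0 i - pad_prefix u 0 i]].
  exists c; rewrite ?inE //; apply/permP => x; apply/rowP => i.
  by rewrite permE mxE !ffunE (fT _ x i (agree_pad_prefix i x)) addrC subrK.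
apply/triangularP => x y i /agree_prefix xy.
by rewrite !permE !mxE xy !(addrC (_ 0 i)) !addrK.
Qed.

Lemma card_triangular : #|triangular| = (#|K| ^ (\sum_(i < n) #|K| ^ i))%N.
Proof.
rewrite triangular_correct_perm card_imset; last exact: correct_perm_inj.
rewrite cardsT card_dep_ffun foldrE big_map big_enum /= expn_sum.
by apply: eq_bigr => i _; rewrite !card_ffun card_ord.
Qed.

End TriangularPerms.

Lemma logn_fact_expn p n : prime p -> logn p (p ^ n)`! = (\sum_(i < n) p ^ i)%N.
Proof.
move=> pr_p; have p_gt1 := prime_gt1 pr_p.
have n_lt : (n < p ^ n)%N := ltn_expl n p_gt1.
rewrite logn_fact // (@big_cat_nat _ _ _ n.+1) //=; last by rewrite ltnS ltnW.
have -> : (\sum_(n.+1 <= k < (p ^ n).+1) p ^ n %/ p ^ k = 0)%N.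
  by rewrite big_nat_cond big1 // => k /andP[/andP[lt_nk _] _]; rewrite divn_small // ltn_exp2l.
rewrite addn0 big_add1 big_nat_rev big_mkord; apply: eq_bigr => i _.
have le_in : (i <= n)%N by exact: ltnW (ltn_ord i).
by rewrite add0n subnSK // -{1}(subnK le_in) expnD mulKn // expn_gt0 ltnW.
Qed.

Lemma triangular_Sylow p n : prime p ->
  (p.-Sylow([set: {perm 'rV['F_p]_n}]) (triangular_group 'F_p n))%g.
Proof.
move=> pr_p; rewrite pHallE subsetT /= card_triangular card_Fp //.
have -> : #|[set: {perm 'rV['F_p]_n}]| = #|'rV['F_p]_n|`!.
  rewrite -cardsT -card_perm; apply: eq_card => s.
  by rewrite !inE; apply/esym/subsetP => x; rewrite inE.
by rewrite card_mx card_Fp // mul1n p_part logn_fact_expn.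
Qed.

Lemma pchar_odd_two_neq0 (R : nzRingType) p :
  p \in [pchar R]%R -> odd p -> (2%:R != 0 :> R)%R.
Proof.
move=> chRp odd_p; rewrite -(dvdn_pcharf chRp) dvdn_prime2 ?(pcharf_prime chRp) //.
by apply: contraTneq odd_p => ->.
Qed.

Lemma complete_mapping_of_p_elt (F : finFieldType) p (s : {perm F}) :
  p \in [pchar F]%R -> odd p -> (p.-elt s)%g ->
  exists f : {perm F}, complete_mapping f /\ cycle_type f = cycle_type s.
Proof.
move=> chFp odd_p ps; have pr_p := pcharf_prime chFp.
have [phi phi_lin [psi phiK psiK]] := pprimeChar_vectAxiom chFp.
have psiD : {morph psi : u v / (u + v)%R}.
  by move=> u v; apply: (can_inj phiK); rewrite -[psi u]scale1r phi_lin scale1r !psiK.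
pose t := transport_perm phiK psiK s.
have tE := transport_permE phiK psiK s.
have [x _ sub_tx] := Sylow_Jsub (triangular_Sylow _ pr_p) (subsetT <[t]>%g)
  (p_elt_morph (Bijective phiK psiK) tE ps).
have txT : (t ^ x)%g \in triangular 'F_p _.
  by apply: (subsetP sub_tx); rewrite memJ_conjg cycle_id.
have fE := transport_permE psiK phiK (t ^ x)%g.
exists (transport_perm psiK phiK (t ^ x)%g); split.
  apply: complete_mapping_morph (Bijective psiK phiK) psiD fE _.
  exact: triangular_add_id_inj (pchar_odd_two_neq0 (pchar_Fp pr_p) odd_p) txT.
rewrite (cycle_type_morph (Bijective psiK phiK) fE) cycle_type_conjg.
exact: cycle_type_morph (Bijective phiK psiK) tE.
Qed.

Theorem corollary1p4 (p k : nat) (F : finFieldType)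
    (S : {group {perm 'I_(p ^ k)}}) :
  prime p -> (0 < k)%N -> odd (p ^ k) -> #|F| = (p ^ k)%N ->
  (S \in 'Syl_p([set: {perm 'I_(p ^ k)}]))%g ->
  forall s : {perm 'I_(p ^ k)}, s \in S ->
  exists f : {perm F}, complete_mapping f /\ cycle_type f = cycle_type s.
Proof.
move=> pr_p k_gt0 odd_q cardF sylS s sS.
have odd_p : odd p by move: odd_q; rewrite oddX eqn0Ngt k_gt0.
have ps : (p.-elt s)%g by move: sylS; rewrite inE => /pHall_pgroup/mem_p_elt; apply.
pose h (i : 'I_(p ^ k)) : F := enum_val (cast_ord (esym cardF) i).
pose h' (y : F) : 'I_(p ^ k) := cast_ord cardF (enum_rank y).
have hK : cancel h h' by move=> i; rewrite /h /h' enum_valK cast_ordKV.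
have h'K : cancel h' h by move=> y; rewrite /h /h' cast_ordK enum_rankK.
have tE := transport_permE hK h'K s.
have [f [cf ctf]] := complete_mapping_of_p_elt (card_finPcharP cardF pr_p) odd_p
  (p_elt_morph (Bijective hK h'K) tE ps).
by exists f; rewrite ctf (cycle_type_morph (Bijective hK h'K) tE).
Qed.
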